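(* Let $P_n(x)$ be a real polynomial all of whose roots are real, with distinct roots $p_1<\dots<p_m$ of multiplicities $r_1,\dots,r_m$. Then $$Z=\sum_{1\le i<j\le m}\frac{r_j^{-1}-r_i^{-1}}{p_j-p_i}$$ is a rational function of the coefficients of $P_n(x)$. *)

From HB Require Import structures.
From mathcomp Require Import all_boot all_order all_algebra.
From mathcomp Require Import reals.
From mathcomp Require Import mpoly.
Set Implicit Arguments. Unset Strict Implicit. Unset Printing Implicit Defensive.
Import Order.TTheory GRing.Theory Num.Theory.
Local Open Scope ring_scope.

Definition Zsum (R : realType) (p : seq R) (r : seq nat) : R :=
  \sum_(i < size p) \sum_(j < size p | (i < j)%N)
     (((nth 0%N r j)%:R)^-1 - ((nth 0%N r i)%:R)^-1) / (p`_j - p`_i).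

Definition coefvec (R : realType) (n : nat) (P : {poly R}) : 'I_n.+1 -> R :=
  fun i => P`_i.
Arguments coefvec {R} n P i.

(* Let s = \prod_j ('X - p_j) be the radical of P and H = \sum_j r_j \prod_(i != j) ('X - p_i),
   so that P' s = P H.  With deg s = m and deg H < m fixed, this identity is a linear system in the
   coefficients of s - 'X^m and H whose matrix (a generalized Sylvester matrix) has entries among
   the coefficients of P and is injective because H does not vanish at the roots of s.  Solving
   the normal equations by Cramer's rule therefore expresses s and H as rational functions of
   the coefficients of P.
   With z_j = r_j^-1 \sum_(i != j) (p_j - p_i)^-1, the sum Z = \sum_j z_j is the coefficient of
   degree m - 1 of W = \sum_j z_j \prod_(i != j) ('X - p_i).  Since s''(p_j) = 2 s'(p_j)
   \sum_(i != j) (p_j - p_i)^-1 and H(p_j) = r_j s'(p_j), W is the unique polynomial of degree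
   < m with W H = s' s'' / 2 modulo s: a second injective linear system, now with coefficients
   rational in those of P. *)

From HB Require Import structures.
From mathcomp Require Import all_boot all_order all_algebra.
From mathcomp Require Import reals.
From mathcomp Require Import mpoly.
From mathcomp Require Import ring zify.
Import Order.TTheory GRing.Theory Num.Theory.
Local Open Scope ring_scope.

Set Implicit Arguments. Unset Strict Implicit. Unset Printing Implicit Defensive.

Section SylvesterMatrix.
Variables (R : comNzRingType) (l : nat).

Definition mul_poly_mx a (A : {poly R}) : 'M[R]_(a, l) := \matrix_(t < a) poly_rV (A * 'X^t).

Lemma rVpolyE a (v : 'rV[R]_a) : rVpoly v = \sum_(t < a) v 0 t *: 'X^t.
Proof.
rewrite {1}[v]row_sum_delta linear_sum; apply: eq_bigr => t _.
by rewrite linearZ /= rVpoly_delta.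
Qed.

Lemma mul_poly_mxE a (v : 'rV[R]_a) A : v *m mul_poly_mx a A = poly_rV (rVpoly v * A).
Proof.
apply/rowP => k; rewrite !mxE rVpolyE mulr_suml coef_sum; apply: eq_bigr => t _.
by rewrite /mul_poly_mx !mxE -scalerAl coefZ [A * _]mulrC.
Qed.

(* For a = size B - 1, b = size A - 1 and l = a + b this is the Sylvester matrix of A and B. *)
Definition gen_sylvester_mx a b (A B : {poly R}) : 'M[R]_(a + b, l) :=
  col_mx (mul_poly_mx a A) (mul_poly_mx b B).

Lemma gen_sylvester_mxE a b (v : 'rV[R]_(a + b)) A B :
  v *m gen_sylvester_mx a b A B = poly_rV (rVpoly (lsubmx v) * A + rVpoly (rsubmx v) * B).
Proof. by rewrite -{1}(hsubmxK v) mul_row_col !mul_poly_mxE linearD. Qed.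

End SylvesterMatrix.

Lemma size_bezout_comb (R : nzRingType) a b l (A B u v : {poly R}) :
  (size A + a <= l.+1)%N -> (size B + b <= l.+1)%N ->
  (size u <= a)%N -> (size v <= b)%N -> (size (u * A + v * B)%R <= l)%N.
Proof.
move=> sA sB su sv; apply: leq_trans (size_polyD _ _) _.
by rewrite geq_max; apply/andP; split; apply: leq_trans (size_polyMleq _ _) _; lia.
Qed.

Lemma row_free_gen_sylvester_mx (R : fieldType) a b l (A B : {poly R}) :
  (size A + a <= l.+1)%N -> (size B + b <= l.+1)%N ->
  (forall u v : {poly R}, (size u <= a)%N -> (size v <= b)%N ->
     u * A + v * B = 0 -> u = 0 /\ v = 0) ->
  row_free (gen_sylvester_mx l a b A B).
Proof.
move=> sA sB uniq_sol; apply: inj_row_free => w; rewrite gen_sylvester_mxE => comb0.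
have := poly_rV_K (size_bezout_comb (u := rVpoly (lsubmx w)) (v := rVpoly (rsubmx w))
  sA sB (size_poly _ _) (size_poly _ _)).
rewrite comb0 linear0 => /esym/(uniq_sol _ _ (size_poly _ _) (size_poly _ _)).
case=> /(congr1 (@poly_rV _ a)) + /(congr1 (@poly_rV _ b)).
by rewrite !rVpolyK !linear0 => wl0 wr0; rewrite -(hsubmxK w) wl0 wr0 row_mx0.
Qed.

Section RationalOn.
Variables (R : fieldType) (k : nat) (T : Type) (dom : T -> Prop) (coords : T -> 'I_k -> R).

Definition rational_on (f : T -> R) := exists N D : {mpoly R[k]},
  forall x, dom x -> D.@[coords x] != 0 /\ f x = N.@[coords x] / D.@[coords x].

Lemma eq_rational_on f g :
  (forall x, dom x -> f x = g x) -> rational_on f -> rational_on g.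
Proof.
move=> fg [N [D fND]]; exists N, D => x dx; rewrite -fg //; exact: fND.
Qed.

Lemma rational_on_cst c : rational_on (fun _ => c).
Proof. by exists c%:MP, 1 => x _; rewrite meval1 mevalC oner_neq0 divr1. Qed.

Lemma rational_on_coord i : rational_on (fun x => coords x i).
Proof. by exists 'X_i, 1 => x _; rewrite meval1 mevalXU oner_neq0 divr1. Qed.

Lemma rational_onD f g :
  rational_on f -> rational_on g -> rational_on (fun x => f x + g x).
Proof.
move=> [N1 [D1 fND]] [N2 [D2 gND]]; exists (N1 * D2 + N2 * D1), (D1 * D2) => x dx.
have [D1x ->] := fND x dx; have [D2x ->] := gND x dx.
by rewrite mevalD !mevalM mulf_neq0 //; split => //; field; rewrite D1x D2x.
Qed.

Lemma rational_onN f : rational_on f -> rational_on (fun x => - f x).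
Proof.
move=> [N [D fND]]; exists (- N), D => x dx; have [Dx ->] := fND x dx.
by rewrite mevalN mulNr.
Qed.

Lemma rational_onM f g :
  rational_on f -> rational_on g -> rational_on (fun x => f x * g x).
Proof.
move=> [N1 [D1 fND]] [N2 [D2 gND]]; exists (N1 * N2), (D1 * D2) => x dx.
have [D1x ->] := fND x dx; have [D2x ->] := gND x dx.
by rewrite !mevalM mulf_neq0 //; split => //; field; rewrite D1x D2x.
Qed.

Lemma rational_onV f : (forall x, dom x -> f x != 0) ->
  rational_on f -> rational_on (fun x => (f x)^-1).
Proof.
move=> f_neq0 [N [D fND]]; exists D, N => x dx; have [Dx fx] := fND x dx.
have := f_neq0 x dx; rewrite fx mulf_eq0 negb_or => /andP[Nx _].
by rewrite invf_div.
Qed.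

Lemma rational_on_sum (I : Type) (s : seq I) (P : pred I) (F : I -> T -> R) :
  (forall i, rational_on (F i)) -> rational_on (fun x => \sum_(i <- s | P i) F i x).
Proof.
move=> ratF; elim: s => [|i s IHs].
  by apply: eq_rational_on (rational_on_cst 0) => x _; rewrite big_nil.
have [Pi|nPi] := boolP (P i).
  by apply: eq_rational_on (rational_onD (ratF i) IHs) => x _; rewrite big_cons Pi.
by apply: eq_rational_on IHs => x _; rewrite big_cons (negbTE nPi).
Qed.

Lemma rational_on_prod (I : Type) (s : seq I) (P : pred I) (F : I -> T -> R) :
  (forall i, rational_on (F i)) -> rational_on (fun x => \prod_(i <- s | P i) F i x).
Proof.
move=> ratF; elim: s => [|i s IHs].
  by apply: eq_rational_on (rational_on_cst 1) => x _; rewrite big_nil.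
have [Pi|nPi] := boolP (P i).
  by apply: eq_rational_on (rational_onM (ratF i) IHs) => x _; rewrite big_cons Pi.
by apply: eq_rational_on IHs => x _; rewrite big_cons (negbTE nPi).
Qed.

Definition mx_rational_on m l (A : T -> 'M[R]_(m, l)) :=
  forall i j, rational_on (fun x => A x i j).

Lemma mx_rational_on_tr m l (A : T -> 'M[R]_(m, l)) :
  mx_rational_on A -> mx_rational_on (fun x => (A x)^T).
Proof. by move=> ratA i j; apply: eq_rational_on (ratA j i) => x _; rewrite mxE. Qed.

Lemma mx_rational_on_mul m l h (A : T -> 'M[R]_(m, l)) (B : T -> 'M[R]_(l, h)) :
  mx_rational_on A -> mx_rational_on B -> mx_rational_on (fun x => A x *m B x).
Proof.
move=> ratA ratB i j; apply: eq_rational_on; first by move=> x _; rewrite [RHS]mxE.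
by apply: rational_on_sum => t; apply: rational_onM.
Qed.

Lemma mx_rational_on_col m1 m2 l (A : T -> 'M[R]_(m1, l)) (B : T -> 'M[R]_(m2, l)) :
  mx_rational_on A -> mx_rational_on B -> mx_rational_on (fun x => col_mx (A x) (B x)).
Proof.
move=> ratA ratB i j; rewrite -(splitK i); case: (split i) => [i1 | i2] /=.
  by apply: eq_rational_on (ratA i1 j) => x _; rewrite col_mxEu.
by apply: eq_rational_on (ratB i2 j) => x _; rewrite col_mxEd.
Qed.

Lemma rational_on_det m (A : T -> 'M[R]_m) :
  mx_rational_on A -> rational_on (fun x => \det (A x)).
Proof.
move=> ratA; apply: rational_on_sum => s; apply: rational_onM; first exact: rational_on_cst.
by apply: rational_on_prod => i; apply: ratA.
Qed.

Lemma mx_rational_on_inv m (A : T -> 'M[R]_m) : (forall x, dom x -> A x \in unitmx) ->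
  mx_rational_on A -> mx_rational_on (fun x => invmx (A x)).
Proof.
move=> unitA ratA i j.
apply: (eq_rational_on (f := fun x =>
  (\det (A x))^-1 * ((-1) ^+ (j + i) * \det (row' j (col' i (A x)))))).
  by move=> x dx; rewrite /invmx unitA // !mxE.
apply: rational_onM.
  apply: rational_onV; first by move=> x dx; rewrite -unitfE -unitmxE unitA.
  exact: rational_on_det.
apply: rational_onM; first exact: rational_on_cst.
by apply: rational_on_det => a b; apply: eq_rational_on (ratA _ _) => x _; rewrite !mxE.
Qed.

Definition poly_rational_on (F : T -> {poly R}) := forall i, rational_on (fun x => (F x)`_i).

Lemma poly_rational_on_cst (q : {poly R}) : poly_rational_on (fun _ => q).
Proof. by move=> i; apply: rational_on_cst. Qed.

Lemma poly_rational_onD F G :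
  poly_rational_on F -> poly_rational_on G -> poly_rational_on (fun x => F x + G x).
Proof.
by move=> ratF ratG i; apply: eq_rational_on (rational_onD (ratF i) (ratG i)) => x _; rewrite coefD.
Qed.

Lemma poly_rational_onN F : poly_rational_on F -> poly_rational_on (fun x => - F x).
Proof. by move=> ratF i; apply: eq_rational_on (rational_onN (ratF i)) => x _; rewrite coefN. Qed.

Lemma poly_rational_onZ c F : poly_rational_on F -> poly_rational_on (fun x => c *: F x).
Proof.
move=> ratF i; apply: eq_rational_on (rational_onM (rational_on_cst c) (ratF i)) => x _.
by rewrite coefZ.
Qed.

Lemma poly_rational_onM F G :
  poly_rational_on F -> poly_rational_on G -> poly_rational_on (fun x => F x * G x).
Proof.
move=> ratF ratG i; apply: eq_rational_on; first by move=> x _; rewrite [RHS]coefM.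
by apply: rational_on_sum => j; apply: rational_onM.
Qed.

Lemma poly_rational_on_deriv F : poly_rational_on F -> poly_rational_on (fun x => (F x)^`()).
Proof.
move=> ratF i; apply: eq_rational_on (rational_onM (ratF i.+1) (rational_on_cst i.+1%:R)).
by move=> x _; rewrite coef_deriv mulr_natr.
Qed.

Lemma mx_rational_on_poly_rV d F :
  poly_rational_on F -> mx_rational_on (fun x => poly_rV (F x) : 'rV_d).
Proof. by move=> ratF i j; apply: eq_rational_on (ratF j) => x _; rewrite mxE. Qed.

Lemma mx_rational_on_mul_poly a l F :
  poly_rational_on F -> mx_rational_on (fun x => mul_poly_mx l a (F x)).
Proof.
move=> ratF i j; have ratFX := poly_rational_onM ratF (poly_rational_on_cst 'X^i).
by apply: eq_rational_on (ratFX j) => x _; rewrite !mxE.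
Qed.

Lemma poly_rational_on_rV d (F : T -> {poly R}) : (forall x, dom x -> size (F x) <= d)%N ->
  mx_rational_on (fun x => poly_rV (F x) : 'rV_d) -> poly_rational_on F.
Proof.
move=> sizeF ratF i; have [ltid|leid] := ltnP i d.
  by apply: eq_rational_on (ratF 0 (Ordinal ltid)) => x _; rewrite mxE.
apply: eq_rational_on (rational_on_cst 0) => x dx.
by rewrite nth_default // (leq_trans (sizeF x dx)).
Qed.

End RationalOn.

Lemma row_free_mul_tr (R : realFieldType) m l (M : 'M[R]_(m, l)) :
  row_free M -> M *m M^T \in unitmx.
Proof.
move=> freeM; rewrite -row_free_unit; apply: inj_row_free => v vMMt0.
have vM0 : v *m M = 0.
  have : (v *m M *m (v *m M)^T) 0 0 = 0.
    by rewrite trmx_mul mulmxA -(mulmxA v) vMMt0 mul0mx mxE.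
  rewrite mxE; under eq_bigr do rewrite [X in _ * X]mxE -expr2.
  move/psumr_eq0P => sq0; apply/rowP => j; rewrite [RHS]mxE.
  by apply/eqP; rewrite -sqrf_eq0 sq0 // => i _; apply: sqr_ge0.
by apply/eqP; rewrite -(mulmx_free_eq0 _ freeM) vM0.
Qed.

Section RationalSolve.
Variables (R : realFieldType) (k : nat) (T : Type) (dom : T -> Prop) (coords : T -> 'I_k -> R).
Local Notation rational_on := (rational_on dom coords).
Local Notation mx_rational_on := (mx_rational_on dom coords).
Local Notation poly_rational_on := (poly_rational_on dom coords).

Lemma mx_rational_on_solve m l (M : T -> 'M[R]_(m, l)) (b : T -> 'rV[R]_l) (u : T -> 'rV[R]_m) :
  (forall x, dom x -> row_free (M x) /\ u x *m M x = b x) ->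
  mx_rational_on M -> mx_rational_on b -> mx_rational_on u.
Proof.
move=> solved ratM ratb.
have MMt_unit x : dom x -> M x *m (M x)^T \in unitmx.
  by move=> /solved[/row_free_mul_tr].
have uE x : dom x -> u x = b x *m (M x)^T *m invmx (M x *m (M x)^T).
  move=> dx; have [_ <-] := solved x dx.
  by rewrite -[u x *m M x *m _]mulmxA mulmxK ?MMt_unit.
have ratMt := mx_rational_on_tr ratM.
move=> i j; apply: eq_rational_on (mx_rational_on_mul (mx_rational_on_mul ratb ratMt)
  (mx_rational_on_inv MMt_unit (mx_rational_on_mul ratM ratMt)) i j).
by move=> x dx; rewrite uE.
Qed.

Lemma poly_rational_on_bezout a b l (A B C U V : T -> {poly R}) :
  (forall x, dom x -> [/\ (size (A x) + a <= l.+1)%N, (size (B x) + b <= l.+1)%N,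
     (size (U x) <= a)%N, (size (V x) <= b)%N & U x * A x + V x * B x = C x]) ->
  (forall x, dom x -> forall u v : {poly R}, (size u <= a)%N -> (size v <= b)%N ->
     u * A x + v * B x = 0 -> u = 0 /\ v = 0) ->
  poly_rational_on A -> poly_rational_on B -> poly_rational_on C ->
  poly_rational_on U /\ poly_rational_on V.
Proof.
move=> solved uniq_sol ratA ratB ratC.
pose w x := row_mx (poly_rV (U x) : 'rV_a) (poly_rV (V x) : 'rV_b).
have ratw : mx_rational_on w.
  apply: (@mx_rational_on_solve _ _ (fun x => gen_sylvester_mx l a b (A x) (B x)) _ _ _ _
    (mx_rational_on_poly_rV ratC)).
  - move=> x /[dup] dx /solved[sA sB sU sV <-]; split.
      exact: row_free_gen_sylvester_mx sA sB (uniq_sol x dx).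
    by rewrite gen_sylvester_mxE row_mxKl row_mxKr !poly_rV_K.
  - by apply: mx_rational_on_col; apply: mx_rational_on_mul_poly.
split; [apply: (@poly_rational_on_rV _ _ _ _ _ a) | apply: (@poly_rational_on_rV _ _ _ _ _ b)].
- by move=> x /solved[].
- by move=> i j; apply: eq_rational_on (ratw i (lshift b j)) => x _; rewrite row_mxEl.
- by move=> x /solved[].
- by move=> i j; apply: eq_rational_on (ratw i (rshift a j)) => x _; rewrite row_mxEr.
Qed.

End RationalSolve.

Lemma horner_deriv_prod_XsubC_exp (F : fieldType) (I : Type) (s : seq I) (P : pred I)
    (a : I -> F) (e : I -> nat) (x : F) : (forall i, P i -> x != a i) ->
  (\prod_(i <- s | P i) ('X - (a i)%:P) ^+ e i)^`().[x] =
  (\prod_(i <- s | P i) ('X - (a i)%:P) ^+ e i).[x] * \sum_(i <- s | P i) (e i)%:R / (x - a i).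
Proof.
move=> x_notin; elim: s => [|i s IHs]; first by rewrite !big_nil derivC horner0 mulr0.
rewrite !big_cons; have [Pi|_] := boolP (P i) => //.
rewrite derivM deriv_exp derivXsubC mul1r !hornerE hornerMn !hornerE IHs.
have xai_neq0 : x - a i != 0 by rewrite subr_eq0 x_notin.
case: (e i) => [|k] /=; first by rewrite !mul0r !add0r expr0 !mul1r.
by rewrite exprS -mulr_natr; field.
Qed.

Lemma poly_eq0_horner (F : numDomainType) (q : {poly F}) : (forall x, q.[x] = 0) -> q = 0.
Proof.
move=> q0; apply: (@roots_geq_poly_eq0 _ q [seq i%:R | i <- iota 0 (size q)]).
- by apply/allP => _ /mapP[i _ ->]; apply/eqP/q0.
- by rewrite map_inj_uniq ?iota_uniq // => i j /eqP; rewrite eqr_nat => /eqP.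
- by rewrite size_map size_iota.
Qed.

Lemma size_deriv_le (F : nzSemiRingType) (q : {poly F}) : (size q^`() <= (size q).-1)%N.
Proof.
apply/leq_sizeP => j le_j; rewrite coef_deriv nth_default ?mul0rn //.
by move: le_j; case: (size q).
Qed.

Lemma size_monic_subXn (F : nzRingType) (q : {poly F}) d :
  size q = d.+1 -> q \is monic -> (size (q - 'X^d)%R <= d)%N.
Proof.
move=> q_size q_monic; apply/leq_sizeP => k le_dk; rewrite coefB coefXn.
case: ltngtP le_dk => // [lt_dk _ | <- _]; first by rewrite nth_default ?q_size ?subr0.
by rewrite ?eqxx -(monicP q_monic) lead_coefE q_size subrr.
Qed.

Section RootPoly.
Variables (F : numFieldType) (I : finType) (a : I -> F).

Definition root_poly := \prod_i ('X - (a i)%:P).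
Definition root_cofactor j := \prod_(i | i != j) ('X - (a i)%:P).
Definition cofactor_comb (z : I -> F) := \sum_j z j *: root_cofactor j.

Lemma root_polyE j : root_poly = ('X - (a j)%:P) * root_cofactor j.
Proof. by rewrite /root_poly (bigD1 j). Qed.

Lemma root_poly_monic : root_poly \is monic.
Proof. exact: monic_prod_XsubC. Qed.

Lemma root_cofactor_monic j : root_cofactor j \is monic.
Proof. exact: monic_prod_XsubC. Qed.

Lemma size_root_poly : size root_poly = #|I|.+1.
Proof. by rewrite size_prod_XsubC cardT enumT. Qed.

Lemma size_root_cofactor j : size (root_cofactor j) = #|I|.
Proof.
have := size_root_poly; rewrite (root_polyE j).
by rewrite size_Mmonic ?monic_neq0 ?monicXsubC ?root_cofactor_monic // size_XsubC => -[].
Qed.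

Lemma root_poly_at j : root_poly.[a j] = 0.
Proof. by rewrite (root_polyE j) hornerM hornerXsubC subrr mul0r. Qed.

Lemma root_cofactor_at i j : i != j -> (root_cofactor i).[a j] = 0.
Proof.
by move=> ij; rewrite /root_cofactor (bigD1 j) 1?eq_sym //= hornerM hornerXsubC subrr mul0r.
Qed.

Lemma cofactor_comb_at z j : (cofactor_comb z).[a j] = z j * (root_cofactor j).[a j].
Proof.
rewrite /cofactor_comb horner_sum (bigD1 j) //= hornerZ big1 ?addr0 // => i ij.
by rewrite hornerZ root_cofactor_at ?mulr0.
Qed.

Lemma size_cofactor_comb z : (size (cofactor_comb z) <= #|I|)%N.
Proof.
apply/leq_sizeP => k le_Ik; rewrite coef_sum big1 // => i _.
by rewrite coefZ nth_default ?mulr0 // size_root_cofactor.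
Qed.

Lemma coef_cofactor_comb z : (cofactor_comb z)`_#|I|.-1 = \sum_j z j.
Proof.
rewrite coef_sum; apply: eq_bigr => j _.
by rewrite coefZ -(size_root_cofactor j) -lead_coefE (monicP (root_cofactor_monic j)) mulr1.
Qed.

Lemma deriv_root_poly_at j : root_poly^`().[a j] = (root_cofactor j).[a j].
Proof.
rewrite (root_polyE j) derivM derivXsubC mul1r hornerD hornerM hornerXsubC.
by rewrite subrr mul0r addr0.
Qed.

Lemma horner_root_cofactor x j : x != a j ->
  (root_cofactor j).[x] = root_poly.[x] / (x - a j).
Proof.
move=> xaj; rewrite (root_polyE j) hornerM hornerXsubC [(x - _) * _]mulrC mulfK //.
by rewrite subr_eq0.
Qed.

Variable e : I -> nat.

Definition logderiv_num := cofactor_comb (fun j => (e j)%:R).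

(* Times [root_poly], the difference of the two sides vanishes at the [a j] trivially and
   elsewhere by the logarithmic derivative. *)
Lemma deriv_mul_root_poly (P : {poly F}) c : P = c *: \prod_i ('X - (a i)%:P) ^+ e i ->
  P^`() * root_poly = P * logderiv_num.
Proof.
move=> PE; apply/eqP; rewrite -subr_eq0; apply/eqP.
apply: (mulIf (monic_neq0 root_poly_monic)); rewrite mul0r.
apply: poly_eq0_horner => x; rewrite hornerM.
have [/existsP[j /eqP xaj]|x_notin] := boolP [exists j, x == a j].
  by rewrite xaj root_poly_at mulr0.
have x_neq i : x != a i by apply: contra x_notin => xai; apply/existsP; exists i.
rewrite hornerD hornerN !hornerM {1}PE derivZ hornerZ horner_deriv_prod_XsubC_exp //.
rewrite PE hornerZ /logderiv_num /cofactor_comb horner_sum.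
have -> : \sum_i ((e i)%:R *: root_cofactor i).[x] =
    root_poly.[x] * \sum_i (e i)%:R / (x - a i).
  by rewrite mulr_sumr; apply: eq_bigr => i _; rewrite hornerZ horner_root_cofactor //; ring.
by ring.
Qed.

Hypothesis a_inj : injective a.

Lemma root_cofactor_neq0 j : (root_cofactor j).[a j] != 0.
Proof.
rewrite horner_prod; apply/prodf_neq0 => i ij; rewrite hornerXsubC subr_eq0.
by apply: contra ij => /eqP/a_inj ->.
Qed.

Lemma deriv_root_cofactor_at j : (root_cofactor j)^`().[a j] =
  (root_cofactor j).[a j] * \sum_(i | i != j) (a j - a i)^-1.
Proof.
have := @horner_deriv_prod_XsubC_exp F I (index_enum I) (fun i => i != j) a (fun _ => 1%N) (a j).
rewrite /root_cofactor; under eq_bigr do rewrite expr1; under [X in _ * X]eq_bigr do rewrite div1r.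
by apply => i; apply: contra => /eqP/a_inj ->.
Qed.

Lemma deriv2_root_poly_at j : root_poly^`()^`().[a j] =
  2 * (root_cofactor j).[a j] * \sum_(i | i != j) (a j - a i)^-1.
Proof.
rewrite (root_polyE j) !derivM derivXsubC mul1r derivD derivM derivXsubC mul1r.
rewrite !hornerD hornerM hornerXsubC subrr mul0r addr0 deriv_root_cofactor_at.
by rewrite -mulrA mulr_natl mulr2n.
Qed.

Lemma root_poly_dvdp q : (forall j, root q (a j)) -> root_poly %| q.
Proof.
move=> q_a; rewrite /root_poly -(big_map a xpredT (fun z => 'X - z%:P)).
apply: uniq_roots_dvdp; first by apply/allP => _ /mapP[j _ ->].
by rewrite uniq_rootsE map_inj_uniq ?index_enum_uniq.
Qed.

Lemma root_poly_coprime_eq0 (G u v : {poly F}) : (forall j, G.[a j] != 0) -> (size u <= #|I|)%N ->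
  G * u = root_poly * v -> u = 0 /\ v = 0.
Proof.
move=> G_a size_u Gu_eq.
have u0 : u = 0.
  apply/eqP; apply: contraTT size_u => u_neq0; rewrite -ltnNge -size_root_poly.
  apply: dvdp_leq u_neq0 (root_poly_dvdp _) => j; apply/eqP.
  have := congr1 (horner^~ (a j)) Gu_eq; rewrite !hornerM root_poly_at mul0r.
  by move/eqP; rewrite mulf_eq0 (negbTE (G_a j)) => /eqP.
split=> //; move: Gu_eq; rewrite u0 mulr0 => /esym/eqP.
by rewrite mulf_eq0 (negbTE (monic_neq0 root_poly_monic)) => /eqP.
Qed.

Hypothesis e_pos : forall j, (0 < e j)%N.

Lemma natr_e_neq0 j : (e j)%:R != 0 :> F.
Proof. by rewrite pnatr_eq0 -lt0n e_pos. Qed.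

Lemma logderiv_num_neq0 j : logderiv_num.[a j] != 0.
Proof. by rewrite cofactor_comb_at mulf_neq0 ?natr_e_neq0 ?root_cofactor_neq0. Qed.

Definition z_weight j := (e j)%:R^-1 * \sum_(i | i != j) (a j - a i)^-1.
Definition z_poly := cofactor_comb z_weight.

(* At [a j] both terms of the difference equal
   [(root_cofactor j).[a j] ^+ 2 * \sum_(i | i != j) (a j - a i)^-1]. *)
Lemma root_poly_dvd_z_poly :
  root_poly %| 2^-1 *: (root_poly^`() * root_poly^`()^`()) - z_poly * logderiv_num.
Proof.
apply: root_poly_dvdp => j; apply/eqP.
rewrite hornerD hornerN !hornerM hornerZ hornerM deriv_root_poly_at deriv2_root_poly_at.
by rewrite !cofactor_comb_at /z_weight; field; rewrite natr_e_neq0.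
Qed.

End RootPoly.

Lemma sum_pairs_diff_quotient (F : fieldType) N (w q : nat -> F) :
  \sum_(i < N) \sum_(j < N | (i < j)%N) (w j - w i) / (q j - q i) =
  \sum_(j < N) w j * \sum_(i < N | i != j) (q j - q i)^-1.
Proof.
pose f (i j : 'I_N) := w j / (q j - q i).
have -> : \sum_(i < N) \sum_(j < N | (i < j)%N) (w j - w i) / (q j - q i) =
    \sum_(i < N) \sum_(j < N) (if (i < j)%N then f i j else 0) +
    \sum_(i < N) \sum_(j < N) (if (i < j)%N then f j i else 0).
  rewrite -big_split; apply: eq_bigr => i _; rewrite -big_split big_mkcond.
  apply: eq_bigr => j _ /=; case: ifP => _; last by rewrite addr0.
  by rewrite /f mulrBl -[q i - q j]opprB invrN mulrN.
have -> : \sum_(j < N) w j * \sum_(i < N | i != j) (q j - q i)^-1 =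
    \sum_(j < N) \sum_(i < N) (if (i < j)%N then f i j else 0) +
    \sum_(j < N) \sum_(i < N) (if (j < i)%N then f i j else 0).
  rewrite -big_split; apply: eq_bigr => j _; rewrite -big_split mulr_sumr big_mkcond.
  apply: eq_bigr => i _ /=; rewrite /f; case: (ltngtP i j) => [ij|ji|/val_inj ->].
  - by rewrite ifT ?addr0 // neq_ltn ij.
  - by rewrite ifT ?add0r // neq_ltn ji orbT.
  - by rewrite eqxx !addr0.
by rewrite exchange_big.
Qed.

Section CorollaryThree.
Variables (R : realType) (n : nat) (r : seq nat).
Hypothesis r_pos : all (fun k => (0 < k)%N) r.
Local Notation m := (size r).

Definition factored (x : {poly R} * seq R) : Prop :=
  [/\ size x.1 = n.+1, sorted <%R x.2, size x.2 = m &
      x.1 = lead_coef x.1 *: \prod_(i < size x.2) ('X - (x.2`_i)%:P) ^+ (nth 0%N r i)].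

Local Notation coords x := (coefvec n x.1).
Local Notation rational_on := (rational_on factored (fun x => coords x)).
Local Notation poly_rational_on := (poly_rational_on factored (fun x => coords x)).

Definition root_at (p : seq R) (i : 'I_m) := p`_i.
Definition mult (i : 'I_m) := nth 0%N r i.

Definition radical p := root_poly (root_at p).
Definition logder p := logderiv_num (root_at p) mult.
Definition zpoly p := z_poly (root_at p) mult.
Definition tpoly p := 2^-1 *: ((radical p)^`() * (radical p)^`()^`()).
Definition zrem p := (tpoly p - zpoly p * logder p) %/ radical p.

Lemma mult_pos i : (0 < mult i)%N.
Proof. exact: (all_nthP 0%N r_pos i (ltn_ord i)). Qed.

Lemma factored_inj x : factored x -> injective (root_at x.2).
Proof.
case=> _ /lt_sorted_uniq p_uniq p_size _ i j /eqP.
by rewrite /root_at nth_uniq ?p_size // => /eqP/val_inj.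
Qed.

Lemma factoredE x : factored x ->
  x.1 = lead_coef x.1 *: \prod_i ('X - (root_at x.2 i)%:P) ^+ mult i.
Proof. by case=> _ _ p_size; rewrite p_size. Qed.

Lemma factored_neq0 x : factored x -> x.1 != 0.
Proof. by case=> P_size _ _ _; rewrite -size_poly_eq0 P_size. Qed.

Lemma poly_rational_on_fst : poly_rational_on fst.
Proof.
move=> i; have [ltin|lein] := ltnP i n.+1.
  exact: eq_rational_on (rational_on_coord _ _ (Ordinal ltin)).
apply: eq_rational_on (rational_on_cst _ _ 0) => x [P_size _ _ _].
by rewrite nth_default ?P_size.
Qed.

Lemma size_radical p : size (radical p) = m.+1.
Proof. by rewrite size_root_poly card_ord. Qed.

Lemma factored_deriv x : factored x -> x.1^`() * radical x.2 = x.1 * logder x.2.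
Proof. by move/factoredE; apply: deriv_mul_root_poly. Qed.

Lemma radical_coprime_eq0 x (G u v : {poly R}) : factored x -> (forall j, G.[root_at x.2 j] != 0) ->
  (size u <= m)%N -> G * u = radical x.2 * v -> u = 0 /\ v = 0.
Proof.
move=> fx G_a u_size.
by apply: (root_poly_coprime_eq0 (factored_inj fx) G_a); rewrite card_ord.
Qed.

Lemma size_logder p : (size (logder p) <= m)%N.
Proof. by rewrite -(card_ord m) size_cofactor_comb. Qed.

Lemma size_zpoly p : (size (zpoly p) <= m)%N.
Proof. by rewrite -(card_ord m) size_cofactor_comb. Qed.

Lemma logder_neq0 x : factored x -> forall j, (logder x.2).[root_at x.2 j] != 0.
Proof. by move=> fx; apply: logderiv_num_neq0 (factored_inj fx) mult_pos. Qed.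

Lemma poly_rational_on_radical_logder :
  poly_rational_on (fun x => radical x.2) /\ poly_rational_on (fun x => logder x.2).
Proof.
have ratP := poly_rational_on_fst.
have [ratU ratH] : poly_rational_on (fun x => radical x.2 - 'X^m) /\
                   poly_rational_on (fun x => logder x.2).
  apply: (@poly_rational_on_bezout _ _ _ _ _ m m (n + m)%N (fun x => x.1^`()) (fun x => - x.1)
    (fun x => - (x.1^`() * 'X^m))).
  - move=> x fx; have [P_size _ _ _] := fx; split.
    + by have := size_deriv_le x.1; rewrite P_size /=; lia.
    + by rewrite size_polyN P_size addSn.
    + by apply: size_monic_subXn (size_radical _) (root_poly_monic _).
    + exact: size_logder.
    + by rewrite mulrN [logder _ * _]mulrC -factored_deriv //; ring.
  - move=> x fx u v size_u _ uv0.
    apply: (radical_coprime_eq0 fx (logder_neq0 fx) size_u).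
    apply: (mulfI (factored_neq0 fx)).
    have uP'E : u * x.1^`() = v * x.1 by apply/eqP; rewrite -subr_eq0 -mulrN uv0.
    rewrite mulrA -factored_deriv //; transitivity (radical x.2 * (u * x.1^`())); first by ring.
    by rewrite uP'E; ring.
  - exact: poly_rational_on_deriv.
  - exact: poly_rational_onN.
  - by apply/poly_rational_onN/poly_rational_onM/poly_rational_on_cst/poly_rational_on_deriv.
split=> // i; apply: eq_rational_on (poly_rational_onD ratU (poly_rational_on_cst _ _ 'X^m) i).
by move=> x _; rewrite subrK.
Qed.

Lemma size_zrem p : (size (zrem p) <= m)%N.
Proof.
have size_T : (size (tpoly p) <= m + m)%N.
  apply: leq_trans (size_scale_leq _ _) _; apply: leq_trans (size_polyMleq _ _) _.
  have dS := size_deriv_le (radical p); rewrite size_radical /= in dS.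
  apply: leq_trans (leq_pred _) (leq_add dS _).
  by apply: leq_trans (size_deriv_le _) _; apply: leq_trans (leq_pred _) dS.
have size_zH : (size (zpoly p * logder p)%R <= m + m)%N.
  apply: leq_trans (size_polyMleq _ _) _.
  have := size_zpoly p; have := size_logder p; lia.
rewrite size_divp ?monic_neq0 ?root_poly_monic // size_radical /=.
rewrite leq_subLR; apply: leq_trans (size_polyD _ _) _.
by rewrite size_polyN geq_max size_T size_zH.
Qed.

Lemma zremE x : factored x ->
  zrem x.2 * radical x.2 = tpoly x.2 - zpoly x.2 * logder x.2.
Proof. by move=> fx; apply/divpK/(root_poly_dvd_z_poly (factored_inj fx) mult_pos). Qed.

Lemma poly_rational_on_zpoly : poly_rational_on (fun x => zpoly x.2).
Proof.
have [ratS ratH] := poly_rational_on_radical_logder.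
have ratT : poly_rational_on (fun x => tpoly x.2).
  by apply/poly_rational_onZ/poly_rational_onM; do ![apply: poly_rational_on_deriv].
apply: (proj1 (@poly_rational_on_bezout _ _ _ _ _ m m (m + m)%N _ _ _ _
  (fun x => zrem x.2) _ _ ratH ratS ratT)).
- move=> x fx; split.
  + by rewrite -addSn leq_add2r leqW ?size_logder.
  + by rewrite size_radical.
  + exact: size_zpoly.
  + exact: size_zrem.
  + by rewrite zremE //; ring.
- move=> x fx u v size_u _ uv0.
  have [// | u0 /eqP] := radical_coprime_eq0 (v := - v) fx (logder_neq0 fx) size_u.
    by apply/eqP; rewrite mulrN -subr_eq0 opprK [logder _ * _]mulrC [radical _ * _]mulrC uv0.
  by rewrite oppr_eq0 => /eqP.
Qed.

Lemma Zsum_zpoly x : factored x -> Zsum x.2 r = (zpoly x.2)`_m.-1.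
Proof.
case=> _ _ p_size _; have := coef_cofactor_comb (root_at x.2) (z_weight (root_at x.2) mult).
rewrite card_ord => ->; rewrite /Zsum (sum_pairs_diff_quotient _ (fun j => (nth 0%N r j)%:R^-1)).
by rewrite p_size.
Qed.

Lemma rational_on_Zsum : rational_on (fun x => Zsum x.2 r).
Proof.
by apply: eq_rational_on (poly_rational_on_zpoly m.-1) => x fx; rewrite Zsum_zpoly.
Qed.

End CorollaryThree.

Theorem corollary3 (R : realType) (n : nat) (r : seq nat) :
  all (fun k => (0 < k)%N) r -> sumn r = n ->
  exists N D : {mpoly R[n.+1]},
    forall (P : {poly R}) (p : seq R),
      size P = n.+1 ->
      sorted <%R p -> size p = size r ->
      P = lead_coef P *: \prod_(i < size p) ('X - (p`_i)%:P) ^+ (nth 0%N r i) ->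
      D.@[coefvec n P] != 0 /\
      Zsum p r = N.@[coefvec n P] / D.@[coefvec n P].
Proof.
(* [sumn r = n] is implied by the other hypotheses. *)
move=> r_pos _.
have [N [D ND_Zsum]] := @rational_on_Zsum R n r r_pos.
by exists N, D => P p P_size p_sorted p_size PE; apply: (ND_Zsum (P, p)).
Qed.
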